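(* Let $p$ be a prime and $b$ an integer with $0<b<\frac{p-1}{2}$ and $(p-b)(p-b^{-1})=2p+1$. Then $|\mathrm{inv}_{1,b}|=5$, so $R=\mathbb{C}[y_0,\dots,y_4]$, and $$\ker\varphi_{1,b}=\langle y_2^2-y_1y_3,\ y_1y_2-y_0y_3,\ y_3^{b+1}-y_2y_4,\ y_1^2-y_0y_2,\ y_2y_3^b-y_1y_4,\ y_1y_3^b-y_0y_4\rangle.$$
   Context: Let $S=\mathbb{C}[x_1,x_2]$ (standard grading), $\zeta=e^{2\pi i/p}$, $G=\mathbb{Z}/p\mathbb{Z}=\langle\zeta\rangle$ acting on $S$ by $x_1\mapsto\zeta x_1$, $x_2\mapsto\zeta^bx_2$, with invariant ring $S^G_{1,b}$ (spanned by monomials $x_1^cx_2^d$ with $c+bd\equiv0\pmod p$). $\mathrm{inv}_{1,b}$ denotes the minimal set of monomial generators of $S^G_{1,b}$ as a $\mathbb{C}$-algebra: the nonconstant invariant monomials that are not a product of two nonconstant invariant monomials. Writing $\mathrm{inv}_{1,b}=\{z_0,\dots,z_n\}$ in lexicographic order with $x_1>x_2$ (decreasing exponent of $x_1$), $R=\mathbb{C}[y_0,\dots,y_n]$ with $\deg y_i=\deg z_i$, and $\varphi_{1,b}:R\to S^G_{1,b}$ is the $\mathbb{C}$-algebra map $y_i\mapsto z_i$. $b^{-1}$ is the unique integer $0<b^{-1}<p$ with $bb^{-1}\equiv1\pmod p$. *)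

(* The complex numbers are modelled as  complex R = R[i]  for an arbitrary
   R : realType (every realType is a model of the real numbers). *)
From mathcomp Require Import all_boot all_algebra.
From mathcomp Require Import reals.
From mathcomp Require Import complex.
From mathcomp Require Import mpoly.

Set Implicit Arguments.
Unset Strict Implicit.
Unset Printing Implicit Defensive.

Import GRing.Theory.
Local Open Scope ring_scope.

(* A monomial x1^c x2^d is encoded by its exponent pair (c, d). *)

Definition invariant_exp (p b : nat) (e : nat * nat) : bool :=
  ((e.1 + b * e.2) %% p == 0)%N.

Definition nc_invariant_exp (p b : nat) (e : nat * nat) : bool :=
  (e != (0%N, 0%N)) && invariant_exp p b e.

Definition in_inv (p b : nat) (e : nat * nat) : Prop :=
  nc_invariant_exp p b e /\
  ~ (exists e1 e2 : nat * nat,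
        [/\ nc_invariant_exp p b e1, nc_invariant_exp p b e2
          & e = (e1.1 + e2.1, e1.2 + e2.2)%N]).

Definition lex_gt (e f : nat * nat) : bool :=
  (f.1 < e.1)%N || ((e.1 == f.1) && (f.2 < e.2)%N).

Definition inv_list (p b : nat) (zs : seq (nat * nat)) : Prop :=
  sorted lex_gt zs /\ (forall e, e \in zs <-> in_inv p b e).

Definition monom (C : nzRingType) (e : nat * nat) : {mpoly C[2]} :=
  'X_(@inord 1 0) ^+ e.1 * 'X_(@inord 1 1) ^+ e.2.

Definition varphi (C : nzRingType) (n : nat) (zs : seq (nat * nat))
  (f : {mpoly C[n]}) : {mpoly C[2]} :=
  mmap (fun c : C => c%:MP) (fun i : 'I_n => monom C (nth (0%N, 0%N) zs i)) f.

Definition in_ideal (C : nzRingType) (n : nat) (gs : seq {mpoly C[n]})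
  (f : {mpoly C[n]}) : Prop :=
  exists cs : 'I_(size gs) -> {mpoly C[n]},
    f = \sum_(i < size gs) cs i * gs`_i.

Definition y (C : nzRingType) (i : nat) : {mpoly C[5]} := 'X_(@inord 4 i).

Definition kernel_gens (C : nzRingType) (b : nat) : seq {mpoly C[5]} :=
  [:: y C 2 ^+ 2 - y C 1 * y C 3;
      y C 1 * y C 2 - y C 0 * y C 3;
      y C 3 ^+ b.+1 - y C 2 * y C 4;
      y C 1 ^+ 2 - y C 0 * y C 2;
      y C 2 * y C 3 ^+ b - y C 1 * y C 4;
      y C 1 * y C 3 ^+ b - y C 0 * y C 4].

(* The product condition forces p = 3b + 1.  An invariant exponent (c, d) then
   dominates one of (3b+1, 0), (2b+1, 1), (b+1, 2), (1, 3), (0, 3b+1); as these five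
   are pairwise incomparable, they are exactly the irreducible invariant exponents.
   Read as rewriting rules (y2^2 -> y1 y3, y1 y2 -> y0 y3, ...), the six binomials
   strictly decrease the weight 2 a1 + 3 a2 + 3 a3 of y0^a0 ... y4^a4, so every
   monomial is congruent modulo the ideal to a reduced one, i.e. to y0^c0 y4^c4 t with
   t among y3^j (j <= b), y1 y3^j, y2 y3^j (j < b).  Reduced monomials are separated
   by their images: the exponent of x2 modulo 3b+1 determines t and c4, that of x1
   then determines c0.  Hence two monomials with the same image are congruent, and
   the kernel of a monomial map is spanned by such binomials. *)

From mathcomp Require Import all_boot all_algebra.
From mathcomp Require Import reals complex mpoly.
From mathcomp Require Import zify.

Set Implicit Arguments.
Unset Strict Implicit.
Unset Printing Implicit Defensive.

Import GRing.Theory.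
Local Open Scope ring_scope.

Lemma mcoeff_sumZX (C : nzRingType) k (T : eqType) (s : seq T) (c : T -> C)
    (mon : T -> 'X_{1..k}) M :
  (\sum_(t <- s) c t *: 'X_[mon t])@_M = \sum_(t <- s | mon t == M) c t.
Proof.
rewrite raddf_sum [RHS]big_mkcond /=; apply: eq_bigr => t _.
by rewrite mcoeffZ mcoeffX; case: eqP; rewrite ?mulr1 ?mulr0.
Qed.

Section MonomialMap.
Variables (C : comNzRingType) (n : nat).
Implicit Types (gs : seq {mpoly C[n]}) (f g : {mpoly C[n]}) (m : 'X_{1..n}).

Lemma in_ideal0 gs : in_ideal gs 0.
Proof. by exists (fun _ => 0); rewrite big1 // => i _; rewrite mul0r. Qed.

Lemma in_idealD gs f g : in_ideal gs f -> in_ideal gs g -> in_ideal gs (f + g).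
Proof.
move=> [cf ->] [cg ->]; exists (fun i => cf i + cg i).
by rewrite -big_split; apply: eq_bigr => i _; rewrite mulrDl.
Qed.

Lemma in_idealMl gs q f : in_ideal gs f -> in_ideal gs (q * f).
Proof.
move=> [cf ->]; exists (fun i => q * cf i).
by rewrite mulr_sumr; apply: eq_bigr => i _; rewrite mulrA.
Qed.

Lemma in_idealZ gs c f : in_ideal gs f -> in_ideal gs (c *: f).
Proof. by rewrite -mul_mpolyC; apply: in_idealMl. Qed.

Lemma in_idealB gs f g : in_ideal gs f -> in_ideal gs g -> in_ideal gs (f - g).
Proof. by move=> If Ig; rewrite -mulN1r; apply: in_idealD => //; apply: in_idealMl. Qed.

Lemma in_ideal_mem gs g : g \in gs -> in_ideal gs g.
Proof.
move=> gs_g; have gs_i : (index g gs < size gs)%N by rewrite index_mem.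
exists (fun i => (i == Ordinal gs_i)%:R).
rewrite (bigD1 (Ordinal gs_i)) //= eqxx mul1r nth_index //.
by rewrite big1 ?addr0 // => i /negbTE ->; rewrite mul0r.
Qed.

Lemma in_ideal_monomial_shift gs m l t :
  in_ideal gs ('X_[l] - 'X_[t]) -> in_ideal gs ('X_[m + l] - 'X_[m + t]).
Proof. by rewrite !mpolyXD -mulrBr; apply: in_idealMl. Qed.

Definition mweight (w : 'I_n -> nat) m : nat := \sum_(i < n) m i * w i.

Lemma mweightD w m1 m2 : mweight w (m1 + m2) = (mweight w m1 + mweight w m2)%N.
Proof. by rewrite /mweight -big_split; apply: eq_bigr => i _; rewrite mnmDE mulnDl. Qed.

Definition image_exp (zs : seq (nat * nat)) m : nat * nat :=
  (mweight (fun i => (nth (0, 0) zs i).1) m, mweight (fun i => (nth (0, 0) zs i).2) m)%N.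

Lemma image_expD zs m1 m2 : image_exp zs (m1 + m2) =
  ((image_exp zs m1).1 + (image_exp zs m2).1, (image_exp zs m1).2 + (image_exp zs m2).2)%N.
Proof. by rewrite /image_exp !mweightD. Qed.

Lemma varphi_mmap zs f :
  varphi zs f = mmap (@mpolyC 2 C) (fun i : 'I_n => monom C (nth (0, 0) zs i)) f.
Proof. by []. Qed.

Lemma varphiB zs f g : varphi zs (f - g) = varphi zs f - varphi zs g.
Proof. by rewrite !varphi_mmap raddfB. Qed.

Lemma varphiX zs m : varphi zs 'X_[m] = monom C (image_exp zs m).
Proof.
rewrite varphi_mmap mmapX /mmap1 /monom /image_exp /mweight /= -!prodrXr -big_split.
by apply: eq_bigr => i _; rewrite exprMn -!exprM !(mulnC (m i)).
Qed.

Definition mono2 (e : nat * nat) : 'X_{1..2} := (U_(inord 0) *+ e.1 + U_(inord 1) *+ e.2)%MM.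

Lemma monom_mono2 e : monom C e = 'X_[mono2 e].
Proof. by rewrite mpolyXD -!mpolyXn. Qed.

Lemma mono2_inj : injective mono2.
Proof.
move=> [e1 e2] [f1 f2] E.
have ne01 : (@inord 1 0 == inord 1) = false by rewrite -val_eqE /= !inordK.
have := congr1 (fun m : 'X_{1..2} => m (inord 0)) E.
have := congr1 (fun m : 'X_{1..2} => m (inord 1)) E.
rewrite /= !mnmDE !mulmnE !mnm1E !eqxx ne01 eq_sym ne01 => /= E1 E0.
by congr (_, _); lia.
Qed.

Lemma varphiE zs f :
  varphi zs f = \sum_(m <- msupp f) f@_m *: 'X_[mono2 (image_exp zs m)].
Proof.
rewrite varphi_mmap /mmap; apply: eq_bigr => m _.
by rewrite mul_mpolyC -monom_mono2 -varphiX varphi_mmap mmapX.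
Qed.

Lemma in_ideal_varphi_eq0 zs gs f :
  (forall g, g \in gs -> varphi zs g = 0) -> in_ideal gs f -> varphi zs f = 0.
Proof.
move=> gs0 [cs ->]; rewrite varphi_mmap rmorph_sum; apply: big1 => i _ /=.
by rewrite rmorphM /= -!varphi_mmap (gs0 gs`_i) ?mulr0 // mem_nth.
Qed.

Lemma varphi_eq0_in_ideal zs gs :
  (forall m1 m2, image_exp zs m1 = image_exp zs m2 -> in_ideal gs ('X_[m1] - 'X_[m2])) ->
  forall f, varphi zs f = 0 -> in_ideal gs f.
Proof.
move=> fiber f f0.
have fiber_ex m : exists m', image_exp zs m' == image_exp zs m by exists m.
pose N m := xchoose (fiber_ex m).
(* f is congruent to the sum of the f@_m *: 'X_[N m], whose coefficients are those
   of varphi zs f. *)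
have N_exp m : image_exp zs (N m) = image_exp zs m by apply/eqP/(xchooseP (fiber_ex m)).
have N_eq m1 m2 : image_exp zs m1 = image_exp zs m2 -> N m1 = N m2.
  by move=> E; apply: eq_xchoose => m; rewrite E.
have g0 : \sum_(m <- msupp f) f@_m *: 'X_[N m] = 0.
  apply/mpolyP => s; rewrite mcoeff_sumZX mcoeff0.
  have [/hasP [m0 _ /eqP <-] | /hasPn none] := boolP (has (fun m => N m == s) (msupp f)).
    rewrite -[RHS](mcoeff0 _ (mono2 (image_exp zs m0))) -f0 varphiE mcoeff_sumZX.
    apply: eq_bigl => m; apply/eqP/eqP => [/(congr1 (image_exp zs)) | /mono2_inj /N_eq //].
    by rewrite !N_exp => ->.
  by rewrite big_seq_cond big1 // => m /andP [/none /negbTE ->].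
suff : in_ideal gs (f - \sum_(m <- msupp f) f@_m *: 'X_[N m]) by rewrite g0 subr0.
rewrite {1}(mpolyE f) -sumrB; apply: (big_ind (in_ideal gs)) => [||m _].
- exact: in_ideal0.
- exact: in_idealD.
- by rewrite -scalerBr; apply/in_idealZ/fiber; rewrite N_exp.
Qed.

End MonomialMap.

Section Reduction.
Variables (C : comNzRingType) (n : nat) (zs : seq (nat * nat)) (gs : seq {mpoly C[n]}).
Variables (rules : seq ('X_{1..n} * 'X_{1..n})) (w : 'I_n -> nat).
Hypothesis rules_in_ideal : forall r, r \in rules -> in_ideal gs ('X_[r.1] - 'X_[r.2]).
Hypothesis rules_image_exp : forall r, r \in rules -> image_exp zs r.1 = image_exp zs r.2.
Hypothesis rules_weight : forall r, r \in rules -> (mweight w r.2 < mweight w r.1)%N.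

Definition reduced m := all (fun r => ~~ (r.1 <= m)%MM) rules.

Lemma reduce_monomial m : exists c : 'X_{1..n},
  [/\ reduced c, image_exp zs c = image_exp zs m & in_ideal gs ('X_[m] - 'X_[c])].
Proof.
have [k lt_mk] : exists k, (mweight w m < k)%N by exists (mweight w m).+1.
elim: k m lt_mk => // k IH m lt_mk.
have [red_m | /allPn [r rules_r /negPn le_rm]] := boolP (reduced m).
  by exists m; split; rewrite // subrr; apply: in_ideal0.
have m_eq : m = (m - r.1 + r.1)%MM by rewrite submK.
have [|c [red_c img_c I_c]] := IH (m - r.1 + r.2)%MM.
  by have := rules_weight rules_r; move: lt_mk; rewrite {1}m_eq !mweightD; lia.
exists c; split => //.
  by rewrite img_c [in RHS]m_eq !image_expD (rules_image_exp rules_r).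
rewrite -[_ - _](subrKA ('X_[m - r.1 + r.2])); apply: in_idealD => //.
by rewrite {1}m_eq; apply/in_ideal_monomial_shift/rules_in_ideal.
Qed.

End Reduction.

Definition mk5 (a0 a1 a2 a3 a4 : nat) : 'X_{1..5} :=
  [multinom nth 0%N [:: a0; a1; a2; a3; a4] i | i < 5].

Lemma mk5_ind (P : 'X_{1..5} -> Prop) :
  (forall a0 a1 a2 a3 a4, P (mk5 a0 a1 a2 a3 a4)) -> forall m, P m.
Proof.
move=> Pmk5 m.
suff -> : m = mk5 (m ord0) (m (inord 1)) (m (inord 2)) (m (inord 3)) (m (inord 4)) by [].
apply/mnmP => -[[|[|[|[|[|i]]]]] lt_i5] //; rewrite mnmE /=; congr (m _); apply/val_inj;
  by rewrite /= ?inordK.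
Qed.

Lemma lepm_mk5 a0 a1 a2 a3 a4 c0 c1 c2 c3 c4 :
  (mk5 a0 a1 a2 a3 a4 <= mk5 c0 c1 c2 c3 c4)%MM =
  [&& a0 <= c0, a1 <= c1, a2 <= c2, a3 <= c3 & a4 <= c4]%N.
Proof.
apply/mnm_lepP/and5P => [le_ac | [? ? ? ? ?] [[|[|[|[|[|i]]]]] lt_i5]] //; rewrite ?mnmE //.
have le k : (k < 5)%N ->
    (nth 0 [:: a0; a1; a2; a3; a4] k <= nth 0 [:: c0; c1; c2; c3; c4] k)%N.
  by move=> lt_k5; have := le_ac (inord k); rewrite !mnmE inordK.
by split; [exact: (le 0%N) | exact: (le 1%N) | exact: (le 2%N) | exact: (le 3%N)
  | exact: (le 4%N)].
Qed.

Lemma mweight_mk5 (w : nat -> nat) a0 a1 a2 a3 a4 :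
  mweight (fun i : 'I_5 => w i) (mk5 a0 a1 a2 a3 a4) =
  (a0 * w 0 + a1 * w 1 + a2 * w 2 + a3 * w 3 + a4 * w 4)%N.
Proof. by rewrite /mweight !big_ord_recl big_ord0 /mk5 !mnmE /bump /= addn0 !addnA. Qed.

Lemma mpolyX_y (C : nzRingType) (i : 'I_5) : 'X_i = y C i.
Proof. by rewrite /y inord_val. Qed.

Lemma mpolyX_mk5 (C : nzRingType) a0 a1 a2 a3 a4 :
  'X_[mk5 a0 a1 a2 a3 a4] =
  y C 0 ^+ a0 * y C 1 ^+ a1 * y C 2 ^+ a2 * y C 3 ^+ a3 * y C 4 ^+ a4.
Proof.
by rewrite mpolyXE_id !big_ord_recl big_ord0 mulr1 !mulrA /mk5 !mnmE !mpolyX_y.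
Qed.

Section KernelGenerators.
Variables (C : comNzRingType) (b : nat).
Hypothesis b_gt0 : (0 < b)%N.

Definition inv_exps : seq (nat * nat) :=
  [:: (3 * b + 1, 0); (2 * b + 1, 1); (b + 1, 2); (1, 3); (0, 3 * b + 1)]%N.

Definition kernel_rules : seq ('X_{1..5} * 'X_{1..5}) :=
  [:: (mk5 0 0 2 0 0, mk5 0 1 0 1 0); (mk5 0 1 1 0 0, mk5 1 0 0 1 0);
      (mk5 0 0 0 b.+1 0, mk5 0 0 1 0 1); (mk5 0 2 0 0 0, mk5 1 0 1 0 0);
      (mk5 0 0 1 b 0, mk5 0 1 0 0 1); (mk5 0 1 0 b 0, mk5 1 0 0 0 1)].

Lemma kernel_gensE : kernel_gens C b = [seq 'X_[r.1] - 'X_[r.2] | r <- kernel_rules].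
Proof. by rewrite /= !mpolyX_mk5 !expr0 !expr1 !mulr1 !mul1r. Qed.

Lemma image_exp_mk5 a0 a1 a2 a3 a4 : image_exp inv_exps (mk5 a0 a1 a2 a3 a4) =
  (a0 * (3 * b + 1) + a1 * (2 * b + 1) + a2 * (b + 1) + a3,
   a1 + a2 * 2 + a3 * 3 + a4 * (3 * b + 1))%N.
Proof.
rewrite /image_exp (mweight_mk5 (fun k => (nth (0, 0) inv_exps k).1)).
by rewrite (mweight_mk5 (fun k => (nth (0, 0) inv_exps k).2)) /=; congr (_, _); lia.
Qed.

Lemma kernel_rules_image_exp :
  all (fun r => image_exp inv_exps r.1 == image_exp inv_exps r.2) kernel_rules.
Proof. by rewrite /= !image_exp_mk5 !xpair_eqE; lia. Qed.

Definition kernel_rules_weight (i : 'I_5) : nat := nth 0 [:: 0; 2; 3; 3; 0]%N i.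

Lemma kernel_rules_weight_decrease :
  all (fun r => mweight kernel_rules_weight r.2 < mweight kernel_rules_weight r.1)%N
    kernel_rules.
Proof. by rewrite /= !(mweight_mk5 (nth 0 [:: 0; 2; 3; 3; 0]%N)) /=; lia. Qed.

Lemma reduced_kernel_rules_mk5 c0 c1 c2 c3 c4 :
  reduced kernel_rules (mk5 c0 c1 c2 c3 c4) ->
  (c1 + c2 <= 1)%N /\ (c1 + c2 * 2 + c3 * 3 < 3 * b + 1)%N.
Proof. by rewrite /reduced /= !lepm_mk5 !leq0n /=; lia. Qed.

Lemma reduced_image_exp_inj c d :
  reduced kernel_rules c -> reduced kernel_rules d ->
  image_exp inv_exps c = image_exp inv_exps d -> c = d.
Proof.
elim/mk5_ind: c => c0 c1 c2 c3 c4; elim/mk5_ind: d => d0 d1 d2 d3 d4.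
move=> /reduced_kernel_rules_mk5 [c12 c123] /reduced_kernel_rules_mk5 [d12 d123].
rewrite !image_exp_mk5 => -[E1 E2].
have q_gt0 : (0 < 3 * b + 1)%N by rewrite addn1.
have e4 : c4 = d4.
  have := congr1 (divn^~ (3 * b + 1)) E2; rewrite /= ![(_ + _ + _ + _)%N]addnC.
  by rewrite !divnMDl // !divn_small ?addn0.
have [e1 e2 e3] : [/\ c1 = d1, c2 = d2 & c3 = d3].
  by move: E2; rewrite e4 => /addIn E2; split; lia.
have e0 : c0 = d0.
  apply/eqP; rewrite -(eqn_pmul2r q_gt0); apply/eqP.
  by move: E1; rewrite e1 e2 e3 => /addIn/addIn/addIn.
by rewrite e0 e1 e2 e3 e4.
Qed.

Lemma varphi_inv_exps_eq0 f : varphi inv_exps f = 0 <-> in_ideal (kernel_gens C b) f.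
Proof.
have rules_in_ideal r :
    r \in kernel_rules -> in_ideal (kernel_gens C b) ('X_[r.1] - 'X_[r.2]).
  by move=> rules_r; apply: in_ideal_mem; rewrite kernel_gensE; apply/mapP; exists r.
have rules_image_exp r :
    r \in kernel_rules -> image_exp inv_exps r.1 = image_exp inv_exps r.2.
  by move=> /(allP kernel_rules_image_exp)/eqP.
have rules_weight r : r \in kernel_rules ->
    (mweight kernel_rules_weight r.2 < mweight kernel_rules_weight r.1)%N.
  exact: (allP kernel_rules_weight_decrease).
have reduce := reduce_monomial rules_in_ideal rules_image_exp rules_weight.
split; last first.
  apply: in_ideal_varphi_eq0 => g; rewrite kernel_gensE => /mapP [r rules_r ->].
  by rewrite varphiB !varphiX rules_image_exp ?subrr.
apply: varphi_eq0_in_ideal => m1 m2 E.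
have [c1 [red1 img1 I1]] := reduce m1; have [c2 [red2 img2 I2]] := reduce m2.
have c12 : c1 = c2 by apply: reduced_image_exp_inj; rewrite // img1 img2.
have -> : 'X_[m1] - 'X_[m2] = ('X_[m1] - 'X_[c1]) - ('X_[m2] - 'X_[c1]) :> {mpoly C[5]}.
  by rewrite opprB addrA subrK.
by apply: in_idealB; rewrite // c12.
Qed.

End KernelGenerators.

Definition exp_le (e f : nat * nat) : bool := (e.1 <= f.1)%N && (e.2 <= f.2)%N.

Lemma invariant_expB p b e f : invariant_exp p b e -> invariant_exp p b f -> exp_le f e ->
  invariant_exp p b (e.1 - f.1, e.2 - f.2)%N.
Proof.
case: e f => [c d] [c' d']; rewrite /invariant_exp /exp_le /= -!/(dvdn _ _).
move=> inv_e inv_f /andP [le_c le_d].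
have bd : (b * d' <= b * d)%N by rewrite leq_mul2l le_d orbT.
have E : (c + b * d = (c - c' + b * (d - d')) + (c' + b * d'))%N by rewrite mulnBr; lia.
by move: inv_e; rewrite E dvdn_addl.
Qed.

Section InvariantGenerators.
Variable b : nat.
Hypothesis b_gt0 : (0 < b)%N.
Local Notation p := (3 * b + 1)%N.

Lemma inv_exps_nc_invariant : all (nc_invariant_exp p b) (inv_exps b).
Proof.
rewrite /= /nc_invariant_exp /invariant_exp /= -!/(dvdn _ _).
have [-> -> -> ->] : [/\ p + b * 0 = 1 * p, 2 * b + 1 + b * 1 = 1 * p,
  b + 1 + b * 2 = 1 * p & 1 + b * 3 = 1 * p]%N by split; lia.
by rewrite add0n !dvdn_mull ?dvdnn // !xpair_eqE /=; lia.
Qed.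

Lemma inv_exps_antichain :
  all (fun z => all (fun z' => exp_le z' z ==> (z' == z)) (inv_exps b)) (inv_exps b).
Proof. by rewrite /= /exp_le /= !xpair_eqE; lia. Qed.

Lemma nc_invariant_exp_dominates e :
  nc_invariant_exp p b e -> has (exp_le^~ e) (inv_exps b).
Proof.
case: e => c d; rewrite /nc_invariant_exp /invariant_exp xpair_eqE /= -/(dvdn _ _).
move=> /andP [cd_neq0 dvd_cd].
have coprime_pb : coprime p b by rewrite /coprime gcdnC gcdnMDl gcdn1.
have c0_d : c = 0%N -> d = 0%N \/ (p <= d)%N.
  move=> c0; move: dvd_cd; rewrite c0 add0n Gauss_dvdr //.
  by case: d {cd_neq0 c0} => [|d]; [left | right; apply: dvdn_leq].
have pos_cd : (0 < c + b * d)%N -> (p <= c + b * d)%N by move/dvdn_leq; apply.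
rewrite /= /exp_le /=.
by move: cd_neq0 c0_d pos_cd; case: d {dvd_cd} => [|[|[|d]]]; lia.
Qed.

Lemma in_inv_inv_exps e : in_inv p b e <-> e \in inv_exps b.
Proof.
have inv_nc z : z \in inv_exps b -> nc_invariant_exp p b z := allP inv_exps_nc_invariant z.
have antichain z z' : z \in inv_exps b -> z' \in inv_exps b -> exp_le z' z -> z' = z.
  move=> z_in z'_in le_z'z; apply/eqP.
  by have := allP (allP inv_exps_antichain z z_in) z' z'_in; rewrite le_z'z.
split.
- case=> nc_e irreducible_e.
  have /hasP [z z_in le_ze] := nc_invariant_exp_dominates nc_e.
  have [-> // | ne_ze] := eqVneq e z.
  have /andP [_ inv_z] := inv_nc z z_in; have /andP [_ inv_e] := nc_e.
  have inv_ez := invariant_expB inv_e inv_z le_ze.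
  case: irreducible_e; exists z, (e.1 - z.1, e.2 - z.2)%N; split; first exact: inv_nc.
    rewrite /nc_invariant_exp inv_ez andbT; move: ne_ze le_ze.
    case: e z {inv_e inv_z inv_ez z_in nc_e} => [c d] [c' d'].
    by rewrite /exp_le !xpair_eqE /=; lia.
  move: le_ze; case: e z {inv_e inv_z inv_ez z_in nc_e ne_ze} => [c d] [c' d'].
  by move=> /andP /= [? ?]; congr (_, _); lia.
- move=> e_in; split; first exact: inv_nc.
  case=> e1 [e2 [nc1 nc2 E]].
  have /hasP [z z_in le_ze1] := nc_invariant_exp_dominates nc1.
  have z_e : z = e by apply: antichain => //; move: le_ze1; rewrite E /exp_le /=; lia.
  move: nc2 le_ze1; rewrite z_e E /nc_invariant_exp /exp_le /=.
  by case: e1 e2 {nc1 E z_e} => [c1 d1] [c2 d2]; rewrite xpair_eqE /=; lia.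
Qed.

Lemma lex_gt_trans : transitive lex_gt.
Proof. by move=> [? ?] [? ?] [? ?]; rewrite /lex_gt /=; lia. Qed.

Lemma lex_gt_irr : irreflexive lex_gt.
Proof. by move=> [? ?]; rewrite /lex_gt /=; lia. Qed.

Lemma inv_list_inv_exps zs : inv_list p b zs <-> zs = inv_exps b.
Proof.
have sorted_inv_exps : sorted lex_gt (inv_exps b) by rewrite /= /lex_gt /=; lia.
split => [[sorted_zs mem_zs] | ->]; last by split=> // e; rewrite in_inv_inv_exps.
apply: (irr_sorted_eq lex_gt_trans lex_gt_irr) => // e.
by apply/idP/idP => [/mem_zs/in_inv_inv_exps | /in_inv_inv_exps/mem_zs].
Qed.

End InvariantGenerators.

Lemma modulus_eq_3b1 p b binv : (0 < b)%N -> (2 * b < p - 1)%N -> (0 < binv < p)%N ->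
  ((p - b) * (p - binv) = 2 * p + 1)%N -> p = (3 * b + 1)%N.
Proof.
move=> b_gt0 lt_2b_p /andP [binv_gt0 lt_binv_p] product.
have [c c_def] : exists c, c = (p - binv)%N by eexists.
rewrite -c_def in product; have lt_c4 : (c < 4)%N by nia.
by move: product; case: c c_def lt_c4 => [|[|[|[|c]]]] c_def lt_c4; nia.
Qed.

Unset Implicit Arguments.

Theorem proposition5p4 (R : realType) (p b binv : nat) :
  prime p ->
  (0 < b)%N -> (2 * b < p - 1)%N ->
  (0 < binv < p)%N -> (b * binv = 1 %[mod p])%N ->
  ((p - b) * (p - binv) = 2 * p + 1)%N ->
  (exists zs, inv_list p b zs) /\
  (forall zs, inv_list p b zs ->
     size zs = 5%N /\
     (forall f : {mpoly (complex R)[5]},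
        varphi zs f = 0 <-> in_ideal (kernel_gens (complex R) b) f)).
Proof.
move=> _ b_gt0 lt_2b_p binv_range _ product.
rewrite (modulus_eq_3b1 b_gt0 lt_2b_p binv_range product).
split; first by exists (inv_exps b); apply/(inv_list_inv_exps b_gt0).
move=> zs /(inv_list_inv_exps b_gt0) ->; split=> // f.
exact: varphi_inv_exps_eq0.
Qed.
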